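(* Assume the standing assumptions (A1)–(A4), $\rho>0$, and $D_0>0$, $L_0>0$. Let $\epsilon_1,\epsilon_2\ge 0$ satisfy $\bigl[\frac{2\epsilon_1}{\mu_0}\bigr]^{1/2}\le Z_1(\epsilon_2)$. If $p\in\mathbb R^{n_p}$ satisfies $|f(p)-f(p^* )|\le \epsilon_1$, then $|f_0(p)-f_0(p^* )|\le \epsilon_2$.
   Context: Let $n_p,n_c\ge 1$, let $f_0:\mathbb R^{n_p}\to\mathbb R$ and $c_i:\mathbb R^{n_p}\to\mathbb R$ ($i=1,\dots,n_c$) be continuously differentiable, and let $\{1,\dots,n_c\}=I_s\cup I_h$ be a partition into disjoint sets of soft and hard constraint indices. The original problem is $\min_{p\in\mathbb R^{n_p}} f_0(p)$ subject to $c_i(p)\le 0$ for all $i$; $f^{opt}$ denotes its optimal value and $p^{opt}$ an optimal solution (assumed to exist). For a fixed $\varepsilon_\psi>0$ let $\psi(p):=\sum_{i\in I_s}[\max\{0,c_i(p)\}]^2+\sum_{i\in I_h}[\max\{0,c_i(p)+\varepsilon_\psi\}]^2$, and for a penalty parameter $\rho>0$ let $f(p):=f_0(p)+\rho\,\psi(p)$. A differentiable function $\ell$ belongs to $\mathcal F^1_L$ if $\ell(p_2)\le \ell(p_1)+\langle \ell'(p_1),p_2-p_1\rangle+\frac L2\|p_2-p_1\|^2$ for all $p_1,p_2$, and is $\mu$-strongly convex if $\ell(p_2)\ge \ell(p_1)+\langle \ell'(p_1),p_2-p_1\rangle+\frac \mu2\|p_2-p_1\|^2$ for all $p_1,p_2$.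 Standing assumptions: (A1) $f_0(p)\ge 0$ for all $p$; (A2) $f_0\in\mathcal F^1_{L_0}$ and $\psi\in\mathcal F^1_{L_\psi}$ for some reals $L_0,L_\psi\ge 0$; (A3) $f_0$ is $\mu_0$-strongly convex for some $\mu_0>0$, and $\psi$ is convex; (A4) the set $\mathcal A:=\{p:\psi(p)=0\}$ is nonempty and there is $\beta>0$ with $\psi(p)\ge \beta\,[d(p,\mathcal A)]^2$ for all $p$, where $d(p,\mathcal A):=\min_{z\in\mathcal A}\|z-p\|$. Notation: $\|\cdot\|$ is the Euclidean norm; $p^*$ is the unique minimizer of $f$ over $\mathbb R^{n_p}$; $p_u$ is the unique unconstrained minimizer of $f_0$; $p_a$ is a fixed point with $\psi(p_a)=0$; $D_0:=\sup\{\|f_0'(p)\|:\ f_0(p)\le f_0(p_a)\}$; $d(p):=\|p-p^*\|$. For $\epsilon\ge 0$, $Z_1(\epsilon):=\frac{D_0}{L_0}\Bigl[\bigl(1+\frac{2L_0}{D_0^2}\epsilon\bigr)^{1/2}-1\Bigr]$. *)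

From mathcomp Require Import all_boot.
From Stdlib Require Import Reals.
Set Implicit Arguments. Unset Strict Implicit. Unset Printing Implicit Defensive.
Local Open Scope R_scope.

Definition vec (n : nat) := 'I_n -> R.

Definition vadd {n} (u v : vec n) : vec n := fun i => u i + v i.
Definition vsub {n} (u v : vec n) : vec n := fun i => u i - v i.
Definition dot {n} (u v : vec n) : R := \big[Rplus/0]_(i < n) (u i * v i).
Definition norm {n} (u : vec n) : R := sqrt (dot u u).

Definition has_grad {n} (f : vec n -> R) (g : vec n) (p : vec n) : Prop :=
  forall eps, 0 < eps -> exists delta, 0 < delta /\
    forall h : vec n, norm h < delta ->
      Rabs (f (vadd p h) - f p - dot g h) <= eps * norm h.

Definition vcontinuous {n m} (g : vec n -> vec m) : Prop :=
  forall p eps, 0 < eps -> exists delta, 0 < delta /\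
    forall q, norm (vsub q p) < delta -> norm (vsub (g q) (g p)) < eps.

Definition C1_with {n} (f : vec n -> R) (g : vec n -> vec n) : Prop :=
  (forall p, has_grad f (g p) p) /\ vcontinuous g.

Definition in_F1L {n} (l : vec n -> R) (l' : vec n -> vec n) (L : R) : Prop :=
  (forall p, has_grad l (l' p) p) /\
  forall p1 p2, l p2 <= l p1 + dot (l' p1) (vsub p2 p1) + L / 2 * (norm (vsub p2 p1))^2.

Definition strongly_convex {n} (l : vec n -> R) (l' : vec n -> vec n) (mu : R) : Prop :=
  (forall p, has_grad l (l' p) p) /\
  forall p1 p2, l p2 >= l p1 + dot (l' p1) (vsub p2 p1) + mu / 2 * (norm (vsub p2 p1))^2.

Definition convex {n} (l : vec n -> R) : Prop :=
  forall (p1 p2 : vec n) (t : R), 0 <= t <= 1 ->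
    l (fun i => t * p1 i + (1 - t) * p2 i) <= t * l p1 + (1 - t) * l p2.

(* penalty function psi; soft i = true means i in I_s, otherwise i in I_h *)
Definition psi {np nc} (c : 'I_nc -> vec np -> R) (soft : 'I_nc -> bool)
  (eps_psi : R) (p : vec np) : R :=
  \big[Rplus/0]_(i < nc)
     (if soft i then (Rmax 0 (c i p))^2 else (Rmax 0 (c i p + eps_psi))^2).

Definition fpen {np nc} (f0 : vec np -> R) (c : 'I_nc -> vec np -> R)
  (soft : 'I_nc -> bool) (eps_psi rho : R) (p : vec np) : R :=
  f0 p + rho * psi c soft eps_psi p.

Definition Z1 (D0 L0 eps : R) : R :=
  D0 / L0 * (sqrt (1 + 2 * L0 / D0^2 * eps) - 1).

(* The penalized objective f = f0 + rho psi is mu0-strongly convex, so at its minimizer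
   p* it grows at least quadratically: mu0/2 |p - p*|^2 <= f p - f p*.  Hence
   |f p - f p*| <= eps1 forces |p - p*| <= sqrt(2 eps1/mu0) <= Z1(eps2).  On the other
   hand f0 p* <= f0 p_a (compare f at p* and at p_a), so |f0' p*| <= D0, and the
   F^1_L0 upper bound together with the convexity lower bound give
   |f0 p - f0 p*| <= D0 |p - p*| + L0/2 |p - p*|^2.  Z1(eps2) is precisely the positive
   root of D0 r + L0/2 r^2 = eps2. *)

From mathcomp Require Import all_boot.
From Stdlib Require Import Reals Lra Psatz.
Set Implicit Arguments.
Local Open Scope R_scope.

Section Vectors.

Variable n : nat.
Implicit Types (u v w : vec n) (a b t : R).

Lemma dot_ge0 u : 0 <= dot u u.
Proof.
  unfold dot. apply (big_rec (fun x => 0 <= x)); [lra|].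
  intros i x _ Hx. pose proof (pow2_ge_0 (u i)). simpl in *. lra.
Qed.

Lemma dot_sym u v : dot u v = dot v u.
Proof. unfold dot. apply eq_bigr. intros i _. ring. Qed.

Lemma dot_ext u {v w} : (forall i, v i = w i) -> dot u v = dot u w.
Proof. intros H. unfold dot. apply eq_bigr. intros i _. rewrite H. ring. Qed.

Lemma dot_lin u v w a b :
  dot u (fun i => a * v i + b * w i) = a * dot u v + b * dot u w.
Proof.
  unfold dot. apply (big_rec3 (fun x y z => x = a * y + b * z)); [ring|].
  intros i y1 y2 y3 _ H. rewrite H. ring.
Qed.

Lemma dot_scal u v a : dot u (fun i => a * v i) = a * dot u v.
Proof.
  unfold dot. apply (big_rec2 (fun x y => x = a * y)); [ring|].
  intros i y1 y2 _ H. rewrite H. ring.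
Qed.

Lemma norm_ge0 u : 0 <= norm u.
Proof. apply sqrt_pos. Qed.

Lemma norm_sq u : norm u ^ 2 = dot u u.
Proof. unfold norm. rewrite pow2_sqrt; [reflexivity | apply dot_ge0]. Qed.

Lemma norm_scal_sq {u v a} : (forall i, v i = a * u i) -> norm v ^ 2 = a ^ 2 * norm u ^ 2.
Proof.
  intros Hv. rewrite !norm_sq (dot_ext v Hv) dot_scal dot_sym (dot_ext u Hv) dot_scal.
  ring.
Qed.

Lemma dot_cauchy_schwarz u v : Rabs (dot u v) <= norm u * norm v.
Proof.
  set A := dot u u. set B := dot v v. set C := dot u v.
  assert (Hquad : forall s e, 0 <= s * s * A + 2 * e * s * C + e * e * B).
  { intros s e. pose proof (dot_ge0 (fun i => s * u i + e * v i)) as H.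
    rewrite dot_lin (dot_sym _ u) (dot_sym _ v) !dot_lin (dot_sym v u) in H.
    fold A B C in H. nra. }
  assert (HA : 0 <= A) by apply dot_ge0.
  assert (HB : 0 <= B) by apply dot_ge0.
  assert (HCAB : C * C <= A * B).
  { destruct (Rle_lt_or_eq_dec 0 B HB) as [Bpos | B0].
    - pose proof (Hquad B (- C)). nra.
    - destruct (Req_dec C 0) as [C0 | Cn0]; [rewrite C0 -B0; lra|].
      (* with B = 0 the quadratic in e is affine, hence unbounded below unless C = 0 *)
      pose proof (Hquad 1 (- (A + 1) / (2 * C))) as H.
      replace (2 * (- (A + 1) / (2 * C)) * 1 * C) with (- (A + 1)) in H by (field; exact Cn0).
      rewrite -B0 in H. lra. }
  unfold norm. rewrite <- sqrt_mult by assumption. fold A B.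
  rewrite <- (sqrt_Rsqr_abs C). apply sqrt_le_1_alt. unfold Rsqr. lra.
Qed.

Definition vcomb t (p1 p2 : vec n) : vec n := fun i => t * p1 i + (1 - t) * p2 i.

Lemma vsub_vcomb_l t (p1 p2 : vec n) i : vsub p1 (vcomb t p1 p2) i = (1 - t) * vsub p1 p2 i.
Proof. unfold vsub, vcomb. ring. Qed.

Lemma vsub_vcomb_r t (p1 p2 : vec n) i : vsub p2 (vcomb t p1 p2) i = - t * vsub p1 p2 i.
Proof. unfold vsub, vcomb. ring. Qed.

End Vectors.

Lemma Rle_of_forall_one_sub_mul_le c a :
  (forall t, 0 < t <= 1 -> (1 - t) * c <= a) -> c <= a.
Proof.
  intros H. destruct (Rle_lt_dec c a) as [Hle | Hlt]; [exact Hle | exfalso].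
  assert (Ha : 0 <= a) by (pose proof (H 1 ltac:(lra)); lra).
  pose proof (H ((c - a) / (2 * c))) as Ht.
  assert (Hcpos : 0 < c) by lra.
  assert (Hrange : 0 < (c - a) / (2 * c) <= 1).
  { split; [apply Rdiv_lt_0_compat; lra|].
    apply Rmult_le_reg_r with (2 * c); [lra|]. field_simplify; lra. }
  specialize (Ht Hrange).
  replace ((1 - (c - a) / (2 * c)) * c) with ((c + a) / 2) in Ht by (field; lra).
  lra.
Qed.

Section StrongConvexity.

Variable n : nat.

Definition strongly_convex_comb (g : vec n -> R) (mu : R) : Prop :=
  forall (p1 p2 : vec n) t, 0 <= t <= 1 ->
    g (vcomb t p1 p2) <= t * g p1 + (1 - t) * g p2 - mu / 2 * t * (1 - t) * norm (vsub p1 p2) ^ 2.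

Lemma strongly_convex_comb_of_grad (f : vec n -> R) f' mu :
  strongly_convex f f' mu -> strongly_convex_comb f mu.
Proof.
  intros [_ Hsc] p1 p2 t Ht. set q := vcomb t p1 p2.
  set X := dot (f' q) (vsub p1 p2). set N := norm (vsub p1 p2) ^ 2.
  pose proof (Hsc q p1) as H1. pose proof (Hsc q p2) as H2.
  rewrite (dot_ext _ (vsub_vcomb_l t p1 p2)) dot_scal in H1.
  rewrite (dot_ext _ (vsub_vcomb_r t p1 p2)) dot_scal in H2.
  rewrite (norm_scal_sq (vsub_vcomb_l t p1 p2)) in H1.
  rewrite (norm_scal_sq (vsub_vcomb_r t p1 p2)) in H2.
  fold X N in H1, H2.
  assert (T1 : t * (f q + (1 - t) * X + mu / 2 * ((1 - t) ^ 2 * N)) <= t * f p1)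
    by (apply Rmult_le_compat_l; lra).
  assert (T2 : (1 - t) * (f q + - t * X + mu / 2 * ((- t) ^ 2 * N)) <= (1 - t) * f p2)
    by (apply Rmult_le_compat_l; lra).
  nra.
Qed.

Lemma strongly_convex_comb_add_convex (f P : vec n -> R) mu rho :
  strongly_convex_comb f mu -> convex P -> 0 <= rho ->
  strongly_convex_comb (fun p => f p + rho * P p) mu.
Proof.
  intros Hf HP Hrho p1 p2 t Ht.
  pose proof (Hf p1 p2 t Ht). pose proof (HP p1 p2 t Ht) as HPt.
  apply (Rmult_le_compat_l rho) in HPt; [|exact Hrho].
  unfold vcomb in *. lra.
Qed.

Lemma strongly_convex_comb_quadratic_growth (g : vec n -> R) mu pmin p :
  strongly_convex_comb g mu -> (forall q, g pmin <= g q) ->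
  mu / 2 * norm (vsub p pmin) ^ 2 <= g p - g pmin.
Proof.
  intros Hg Hmin. apply Rle_of_forall_one_sub_mul_le. intros t Ht.
  pose proof (Hg p pmin t (conj (Rlt_le _ _ (proj1 Ht)) (proj2 Ht))).
  pose proof (Hmin (vcomb t p pmin)).
  apply Rmult_le_reg_l with t; lra.
Qed.

Lemma Rabs_diff_le_of_F1L_strongly_convex (f : vec n -> R) f' L mu p q :
  in_F1L f f' L -> strongly_convex f f' mu -> 0 <= mu ->
  Rabs (f p - f q) <= norm (f' q) * norm (vsub p q) + L / 2 * norm (vsub p q) ^ 2.
Proof.
  intros [_ Hup] [_ Hlo] Hmu.
  pose proof (Hup q p). pose proof (Hlo q p).
  pose proof (dot_cauchy_schwarz (f' q) (vsub p q)).
  pose proof (Rle_abs (dot (f' q) (vsub p q))).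
  pose proof (Rle_abs (- dot (f' q) (vsub p q))) as Hneg. rewrite Rabs_Ropp in Hneg.
  pose proof (pow2_ge_0 (norm (vsub p q))).
  assert (0 <= mu / 2 * norm (vsub p q) ^ 2) by nra.
  apply Rabs_le. lra.
Qed.

End StrongConvexity.

Lemma psi_ge0 np nc (c : 'I_nc -> vec np -> R) soft eps_psi p :
  0 <= psi c soft eps_psi p.
Proof.
  unfold psi. apply (big_rec (fun y => 0 <= y)); [lra|].
  intros i y _ Hy. destruct (soft i); apply Rplus_le_le_0_compat; auto using pow2_ge_0.
Qed.

Lemma fpen_minimizer_f0_le np nc (f0 : vec np -> R) (c : 'I_nc -> vec np -> R) soft
    eps_psi rho (pstar pa : vec np) :
  0 <= rho -> psi c soft eps_psi pa = 0 ->
  (forall p, fpen f0 c soft eps_psi rho pstar <= fpen f0 c soft eps_psi rho p) ->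
  f0 pstar <= f0 pa.
Proof.
  intros Hrho Hpa Hmin. pose proof (Hmin pa) as H. unfold fpen in H.
  rewrite Hpa in H. pose proof (psi_ge0 c soft eps_psi pstar). nra.
Qed.

Lemma Z1_root D0 L0 eps : 0 < D0 -> 0 < L0 -> 0 <= eps ->
  D0 * Z1 D0 L0 eps + L0 / 2 * Z1 D0 L0 eps ^ 2 = eps.
Proof.
  intros HD0 HL0 Heps. unfold Z1.
  assert (HS : sqrt (1 + 2 * L0 / D0 ^ 2 * eps) * sqrt (1 + 2 * L0 / D0 ^ 2 * eps)
               = 1 + 2 * L0 / D0 ^ 2 * eps).
  { apply sqrt_sqrt.
    assert (0 <= 2 * L0 / D0 ^ 2) by (apply Rle_mult_inv_pos; [lra | apply pow_lt; lra]).
    nra. }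
  revert HS. generalize (sqrt (1 + 2 * L0 / D0 ^ 2 * eps)). intros S HS.
  replace (D0 * (D0 / L0 * (S - 1)) + L0 / 2 * (D0 / L0 * (S - 1)) ^ 2)
    with (D0 ^ 2 / (2 * L0) * (S * S - 1)) by (field; lra).
  rewrite HS. field. lra.
Qed.

Lemma le_Z1_quadratic_le D0 L0 eps r : 0 < D0 -> 0 < L0 -> 0 <= eps ->
  0 <= r <= Z1 D0 L0 eps -> D0 * r + L0 / 2 * r ^ 2 <= eps.
Proof.
  intros HD0 HL0 Heps Hr. rewrite -(Z1_root HD0 HL0 Heps).
  assert (r ^ 2 <= Z1 D0 L0 eps ^ 2) by (apply pow_incr; lra). nra.
Qed.

Lemma Rle_sqrt_of_half_mul_sq_le mu x e :
  0 < mu -> 0 <= x -> mu / 2 * x ^ 2 <= e -> x <= sqrt (2 * e / mu).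
Proof.
  intros Hmu Hx H. rewrite <- (sqrt_pow2 x Hx). apply sqrt_le_1_alt.
  apply Rmult_le_reg_l with (mu / 2); [lra|].
  replace (mu / 2 * (2 * e / mu)) with e by (field; lra). exact H.
Qed.

Theorem corollary2
  (np nc : nat) (Hnp : (1 <= np)%nat) (Hnc : (1 <= nc)%nat)
  (f0 : vec np -> R) (f0' : vec np -> vec np)
  (c : 'I_nc -> vec np -> R) (c' : 'I_nc -> vec np -> vec np)
  (soft : 'I_nc -> bool) (eps_psi rho L0 Lpsi mu0 beta D0 eps1 eps2 : R)
  (pa pstar : vec np)
  (* data *)
  (Hf0C1 : C1_with f0 f0')
  (HcC1 : forall i, C1_with (c i) (c' i))
  (Heps_psi : 0 < eps_psi)
  (Hopt : exists popt : vec np, (forall i, c i popt <= 0) /\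
            forall p : vec np, (forall i, c i p <= 0) -> f0 popt <= f0 p)
  (* (A1) *)
  (HA1 : forall p, 0 <= f0 p)
  (* (A2) *)
  (HL0 : 0 <= L0) (HLpsi : 0 <= Lpsi)
  (HA2f0 : in_F1L f0 f0' L0)
  (HA2psi : exists psi' : vec np -> vec np, in_F1L (psi c soft eps_psi) psi' Lpsi)
  (* (A3) *)
  (Hmu0 : 0 < mu0)
  (HA3f0 : strongly_convex f0 f0' mu0)
  (HA3psi : convex (psi c soft eps_psi))
  (* (A4) *)
  (HAne : exists z : vec np, psi c soft eps_psi z = 0)
  (Hbeta : 0 < beta)
  (HA4 : forall p : vec np, exists z : vec np, psi c soft eps_psi z = 0 /\
           (forall z' : vec np, psi c soft eps_psi z' = 0 ->
              norm (vsub z p) <= norm (vsub z' p)) /\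
           psi c soft eps_psi p >= beta * (norm (vsub z p))^2)
  (* rho, p*, p_a, D0 *)
  (Hrho : 0 < rho)
  (Hpstar : forall p, fpen f0 c soft eps_psi rho pstar <= fpen f0 c soft eps_psi rho p)
  (Hpa : psi c soft eps_psi pa = 0)
  (HD0 : is_lub (fun r => exists p, f0 p <= f0 pa /\ r = norm (f0' p)) D0)
  (HD0pos : 0 < D0) (HL0pos : 0 < L0)
  (* the corollary *)
  (Heps1 : 0 <= eps1) (Heps2 : 0 <= eps2)
  (Hcond : sqrt (2 * eps1 / mu0) <= Z1 D0 L0 eps2) :
  forall p : vec np,
    Rabs (fpen f0 c soft eps_psi rho p - fpen f0 c soft eps_psi rho pstar) <= eps1 ->
    Rabs (f0 p - f0 pstar) <= eps2.
Proof.
  intros p Hp.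
  set delta := norm (vsub p pstar).
  have Hfpen_sc : strongly_convex_comb (fpen f0 c soft eps_psi rho) mu0.
  { apply strongly_convex_comb_add_convex;
      [exact (strongly_convex_comb_of_grad HA3f0) | exact HA3psi | lra]. }
  have Hgrowth := strongly_convex_comb_quadratic_growth pstar p Hfpen_sc Hpstar.
  have Hdelta : 0 <= delta <= Z1 D0 L0 eps2.
  { split; [apply norm_ge0|].
    apply Rle_trans with (2 := Hcond), Rle_sqrt_of_half_mul_sq_le; [exact Hmu0 | apply norm_ge0 |].
    exact (Rle_trans _ _ _ Hgrowth (Rle_trans _ _ _ (Rle_abs _) Hp)). }
  have Hgrad : norm (f0' pstar) <= D0.
  { apply (proj1 HD0). exists pstar.
    split; [exact (fpen_minimizer_f0_le (Rlt_le _ _ Hrho) Hpa Hpstar) | reflexivity]. }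
  apply Rle_trans with (norm (f0' pstar) * delta + L0 / 2 * delta ^ 2).
  - exact (Rabs_diff_le_of_F1L_strongly_convex p pstar HA2f0 HA3f0 (Rlt_le _ _ Hmu0)).
  - apply Rle_trans with (2 := le_Z1_quadratic_le HD0pos HL0pos Heps2 Hdelta).
    apply Rplus_le_compat_r, Rmult_le_compat_r; lra.
Qed.
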